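(* Let $\mathbb{K}$ be $\mathbb{R}$ or $\mathbb{C}$. Let $U$ be a $2$-dimensional $\mathbb{K}$-vector space equipped with a chosen area form (nonzero alternating bilinear form) $\omega$, and let $SL(U)$ be the group of linear automorphisms of $U$ preserving $\omega$, acting on $U\otimes V^*$ via its action on the first factor and hence on $\bigwedge^4(U\otimes V^* )$. Then for every finite-dimensional $\mathbb{K}$-vector space $V$ there is an isomorphism, natural in $V$, $$\mathcal{R}(V)\;\simeq\;\Big(\textstyle\bigwedge^4(U\otimes V^* )\Big)^{SL(U)},$$ where the right-hand side denotes the subspace of $SL(U)$-invariant elements.
   Context: For a finite-dimensional vector space $V$, $\mathcal{R}(V)\subset (V^* )^{\otimes 4}$ denotes the subspace of tetralinear forms $R$ on $V$ satisfying, for all $a,b,c,d\in V$: (1) $R(a,b,c,d)=-R(b,a,c,d)=-R(a,b,d,c)$, and (2) $R(a,b,c,d)+R(b,c,a,d)+R(c,a,b,d)=0$ (the algebraic symmetries of a Riemann curvature tensor). *)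

From HB Require Import structures.
From mathcomp Require Import all_boot all_algebra.
From mathcomp Require Import complex.
From mathcomp Require Import reals.

Set Implicit Arguments.
Unset Strict Implicit.
Unset Printing Implicit Defensive.
Import GRing.Theory Num.Theory.
Local Open Scope ring_scope.

Definition scalar_field (R : realType) (b : bool) : numFieldType :=
  if b then (R : numFieldType) else (complex R : numFieldType).

(* 4-tensors (components w.r.t. a basis indexed by I) *)
Notation tensor4 K I := {ffun (I * I * I * I)%type -> K}.

(* R(V) for V = K^n, in components w.r.t. the standard basis *)
Definition curvature_tensor (K : fieldType) (n : nat) (R : tensor4 K 'I_n) : Prop :=
  forall a b c d : 'I_n,
    R (a, b, c, d) = - R (b, a, c, d) /\
    R (a, b, c, d) = - R (a, b, d, c) /\
    R (a, b, c, d) + R (b, c, a, d) + R (c, a, b, d) = 0.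

(* Lambda^4 X modelled as the alternating 4-tensors in X^{(x)4} (char 0) *)
Definition alternating4 (K : fieldType) (I : finType) (T : tensor4 K I) : Prop :=
  forall x y z w : I,
    T (x, y, z, w) = - T (y, x, z, w) /\
    T (x, y, z, w) = - T (x, z, y, w) /\
    T (x, y, z, w) = - T (x, y, w, z).

(* area form on U = K^2, given by its Gram matrix *)
Definition area_form (K : fieldType) (Om : 'M[K]_2) : Prop :=
  Om^T = - Om /\ (forall i, Om i i = 0) /\ Om != 0.

Definition in_SL (K : fieldType) (Om g : 'M[K]_2) : Prop :=
  g \in unitmx /\ g^T *m Om *m g = Om.

(* action of g on (U (x) V^* )^{(x)4}, basis e_a (x) xi_i indexed by (a, i),
   g acting on the U factors: g e_b = sum_a g a b e_a *)
Definition sl_act (K : fieldType) (n : nat) (g : 'M[K]_2)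
    (T : tensor4 K ('I_2 * 'I_n)%type) : tensor4 K ('I_2 * 'I_n)%type :=
  [ffun x => let '(x1, x2, x3, x4) := x in
     \sum_(b1 < 2) \sum_(b2 < 2) \sum_(b3 < 2) \sum_(b4 < 2)
       g x1.1 b1 * g x2.1 b2 * g x3.1 b3 * g x4.1 b4 *
       T ((b1, x1.2), (b2, x2.2), (b3, x3.2), (b4, x4.2))].

Definition sl_invariant (K : fieldType) (n : nat) (Om : 'M[K]_2)
    (T : tensor4 K ('I_2 * 'I_n)%type) : Prop :=
  forall g, in_SL Om g -> sl_act g T = T.

(* For a linear map f : K^n -> K^m with matrix A (f e_i = sum_p A p i e_p):
   pullback f^* : R(K^m) -> R(K^n) *)
Definition pullR (K : fieldType) (m n : nat) (A : 'M[K]_(m, n))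
    (R : tensor4 K 'I_m) : tensor4 K 'I_n :=
  [ffun x => let '(i, j, k, l) := x in
     \sum_(p < m) \sum_(q < m) \sum_(r < m) \sum_(s < m)
       A p i * A q j * A r k * A s l * R (p, q, r, s)].

(* induced map Lambda^4 (U (x) (K^m)^* ) -> Lambda^4 (U (x) (K^n)^* ) via
   id (x) f^*, where f^* eta_p = sum_i A p i xi_i *)
Definition pullL (K : fieldType) (m n : nat) (A : 'M[K]_(m, n))
    (T : tensor4 K ('I_2 * 'I_m)%type) : tensor4 K ('I_2 * 'I_n)%type :=
  [ffun x => let '(x1, x2, x3, x4) := x in
     \sum_(p < m) \sum_(q < m) \sum_(r < m) \sum_(s < m)
       A p x1.2 * A q x2.2 * A r x3.2 * A s x4.2 *
       T ((x1.1, p), (x2.1, q), (x3.1, r), (x4.1, s))].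

(* Send a curvature tensor R to the antisymmetrisation, over the last three slots, of
   eps(a1, a3) eps(a2, a4) R(i1, i2, i3, i4), where eps is the standard area form of K^2.
   The pair symmetry of R makes the result alternating in all four slots, and it is
   SL(U)-invariant because g eps g^T = det g eps.  Conversely, the torus diag(2, 1/2) kills
   every component of an invariant 4-form whose U-indices are not two 0s and two 1s; an
   alternating tensor is determined by its components at (e0 i, e0 j, e1 k, e1 l), which for
   the image of R equal 3 R(i, j, k, l); and invariance under the unipotent [[1, 1], [0, 1]]
   is exactly the Bianchi identity for these components. *)

From HB Require Import structures.
From mathcomp Require Import all_boot all_algebra.
From mathcomp Require Import complex.
From mathcomp Require Import reals.
From mathcomp Require Import ring.

Set Implicit Arguments.
Unset Strict Implicit.
Unset Printing Implicit Defensive.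
Import GRing.Theory Num.Theory.
Local Open Scope ring_scope.

Definition o0 : 'I_2 := ord0.
Definition o1 : 'I_2 := ord_max.

Lemma ord2P (a : 'I_2) : a = o0 \/ a = o1.
Proof. by case: a => [[|[|m]] Hm]; [left | right | by []]; apply: val_inj. Qed.

Lemma big_ord2 (V : nmodType) (F : 'I_2 -> V) : \sum_(b < 2) F b = F o0 + F o1.
Proof. by rewrite big_ord_recr big_ord1; congr (F _ + F _); apply: val_inj. Qed.

Lemma det_mx2 (K : comNzRingType) (g : 'M[K]_2) :
  \det g = g o0 o0 * g o1 o1 - g o0 o1 * g o1 o0.
Proof.
rewrite (expand_det_row _ o0) big_ord2 /cofactor !det_mx11 !mxE /=.
have -> : lift o0 (0 : 'I_1) = o1 by apply: val_inj.
have -> : lift o1 (0 : 'I_1) = o0 by apply: val_inj.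
rewrite expr0 expr1; ring.
Qed.

Section AreaForm.
Variable K : comNzRingType.

Definition eps (a b : 'I_2) : K :=
  if a == b then 0 else if a == o0 then 1 else -1.

Lemma eps_antisym a b : eps b a = - eps a b.
Proof.
by case: (ord2P a) => ->; case: (ord2P b) => ->; rewrite /eps /= ?oppr0 ?opprK.
Qed.

Lemma eps_mx_det (g : 'M[K]_2) a c :
  \sum_(b < 2) \sum_(d < 2) g a b * g c d * eps b d = \det g * eps a c.
Proof.
rewrite !big_ord2 det_mx2 /eps /=.
by case: (ord2P a) => ->; case: (ord2P c) => ->; rewrite /=; ring.
Qed.

Lemma area_form_conj (Om g : 'M[K]_2) : Om^T = - Om -> (forall i, Om i i = 0) ->
  g^T *m Om *m g = \det g *: Om.
Proof.
move=> OmT Om_diag.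
have Om10 : Om o1 o0 = - Om o0 o1.
  by have := congr1 (fun M : 'M[K]_2 => M o0 o1) OmT; rewrite !mxE.
apply/matrixP => i j; rewrite !mxE !big_ord2 !mxE !big_ord2 !mxE det_mx2.
rewrite Om10 !Om_diag.
by case: (ord2P i) => ->; case: (ord2P j) => ->; rewrite ?Om10 ?Om_diag; ring.
Qed.

End AreaForm.

Lemma in_SLE (K : fieldType) (Om g : 'M[K]_2) : area_form Om ->
  in_SL Om g <-> \det g = 1.
Proof.
case=> OmT [Om_diag Om_neq0]; rewrite /in_SL area_form_conj //; split.
  case=> _ /eqP; rewrite -subr_eq0 -{2}[Om]scale1r -scalerBl scaler_eq0.
  by rewrite (negbTE Om_neq0) orbF subr_eq0 => /eqP.
by move=> detg; rewrite unitmxE detg unitr1 scale1r.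
Qed.

Section CurvatureTensor.
Variables (K : numFieldType) (n : nat) (x : tensor4 K 'I_n).
Hypothesis curv : curvature_tensor x.

Lemma curvature_antisym12 a b c d : x (a, b, c, d) = - x (b, a, c, d).
Proof. by case: (curv a b c d). Qed.

Lemma curvature_antisym34 a b c d : x (a, b, c, d) = - x (a, b, d, c).
Proof. by case: (curv a b c d) => _ []. Qed.

Lemma curvature_bianchi a b c d :
  x (a, b, c, d) + x (b, c, a, d) + x (c, a, b, d) = 0.
Proof. by case: (curv a b c d) => _ []. Qed.

Lemma curvature_swap_pairs a b c d : x (b, a, d, c) = x (a, b, c, d).
Proof. by rewrite curvature_antisym12 curvature_antisym34 opprK. Qed.

(* Twice the difference is an alternating sum of four Bianchi identities. *)
Lemma curvature_pair_sym a b c d : x (a, b, c, d) = x (c, d, a, b).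
Proof.
have B1 := curvature_bianchi c a b d.
have B2 := curvature_bianchi a b d c.
have B3 := curvature_bianchi b d c a.
have B4 := curvature_bianchi d c a b.
rewrite (curvature_antisym34 a b d c) (curvature_antisym34 b d a c)
  (curvature_swap_pairs a d c b) in B2.
rewrite (curvature_swap_pairs c d a b) (curvature_swap_pairs b c a d) in B3.
rewrite (curvature_antisym12 d c a b) (curvature_antisym34 c a d b) in B4.
have : (x (a, b, c, d) - x (c, d, a, b)) *+ 2 = 0 - 0 - 0 + 0.
  by rewrite -{1}B1 -{1}B2 -{1}B3 -B4; ring.
by rewrite !subr0 addr0 => /eqP; rewrite mulrn_eq0 subr_eq0 => /eqP.
Qed.

End CurvatureTensor.

Section AlternatingTensor.
Variables (K : fieldType) (I : finType) (T : tensor4 K I).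
Hypothesis alt : alternating4 T.

Lemma alternating_swap12 y1 y2 y3 y4 : T (y1, y2, y3, y4) = - T (y2, y1, y3, y4).
Proof. by case: (alt y1 y2 y3 y4). Qed.

Lemma alternating_swap23 y1 y2 y3 y4 : T (y1, y2, y3, y4) = - T (y1, y3, y2, y4).
Proof. by case: (alt y1 y2 y3 y4) => _ []. Qed.

Lemma alternating_swap34 y1 y2 y3 y4 : T (y1, y2, y3, y4) = - T (y1, y2, y4, y3).
Proof. by case: (alt y1 y2 y3 y4) => _ []. Qed.

End AlternatingTensor.

Section SlotPermutations.
Variables (K : zmodType) (I : finType).

Definition swap23 (T : tensor4 K I) : tensor4 K I :=
  [ffun y => let '(y1, y2, y3, y4) := y in T (y1, y3, y2, y4)].

Definition swap34 (T : tensor4 K I) : tensor4 K I :=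
  [ffun y => let '(y1, y2, y3, y4) := y in T (y1, y2, y4, y3)].

Definition alt234 (T : tensor4 K I) : tensor4 K I :=
  [ffun y => let '(y1, y2, y3, y4) := y in
     T (y1, y2, y3, y4) - T (y1, y3, y2, y4) - T (y1, y4, y3, y2)
     - T (y1, y2, y4, y3) + T (y1, y3, y4, y2) + T (y1, y4, y2, y3)].

Lemma alt234E T : alt234 T =
  T - swap23 T - swap23 (swap34 (swap23 T)) - swap34 T
  + swap23 (swap34 T) + swap34 (swap23 T).
Proof. by apply/ffunP => -[[[y1 y2] y3] y4]; rewrite !ffunE. Qed.

End SlotPermutations.

Lemma alt234_morph (K : zmodType) (I J : finType)
    (F : tensor4 K I -> tensor4 K J) : zmod_morphism F ->
  (forall T, F (swap23 T) = swap23 (F T)) -> (forall T, F (swap34 T) = swap34 (F T)) ->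
  forall T, F (alt234 T) = alt234 (F T).
Proof.
move=> FB F23 F34 T.
have F0 : F 0 = 0 by rewrite -(subrr 0) FB subrr.
have FN u : F (- u) = - F u by rewrite -sub0r FB F0 sub0r.
have FD u v : F (u + v) = F u + F v by rewrite -{1}[v]opprK FB FN opprK.
by rewrite !alt234E !FD !FN !(F23, F34).
Qed.

Lemma alt234_alternating (K : fieldType) (I : finType) (T : tensor4 K I) :
  (forall y1 y2 y3 y4, T (y2, y1, y4, y3) = T (y1, y2, y3, y4)) ->
  (forall y1 y2 y3 y4, T (y3, y4, y1, y2) = T (y1, y2, y3, y4)) ->
  alternating4 (alt234 T).
Proof.
move=> T2143 T3412.
have T4321 y1 y2 y3 y4 : T (y4, y3, y2, y1) = T (y1, y2, y3, y4).
  by rewrite T2143 T3412.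
move=> y1 y2 y3 y4; rewrite !ffunE; split; last (split; ring).
rewrite (T2143 y1 y2 y4 y3) (T3412 y1 y4 y2 y3) (T4321 y1 y3 y4 y2)
  (T2143 y1 y2 y3 y4) (T4321 y1 y4 y3 y2) (T3412 y1 y3 y2 y4).
ring.
Qed.

Section TensorActions.
Variables (K : fieldType) (m n : nat).

Lemma sl_act_sub (g : 'M[K]_2) : zmod_morphism (@sl_act K n g).
Proof.
move=> T T'; apply/ffunP => -[[[y1 y2] y3] y4]; rewrite !ffunE.
do 4 (rewrite -sumrB; apply: eq_bigr => ? _).
by rewrite !ffunE mulrBr.
Qed.

Lemma sl_act_swap23 (g : 'M[K]_2) (T : tensor4 K ('I_2 * 'I_n)) :
  sl_act g (swap23 T) = swap23 (sl_act g T).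
Proof.
apply/ffunP => -[[[y1 y2] y3] y4]; rewrite !ffunE; apply: eq_bigr => b1 _.
rewrite exchange_big; do 3 (apply: eq_bigr => ? _).
by rewrite ffunE /=; ring.
Qed.

Lemma sl_act_swap34 (g : 'M[K]_2) (T : tensor4 K ('I_2 * 'I_n)) :
  sl_act g (swap34 T) = swap34 (sl_act g T).
Proof.
apply/ffunP => -[[[y1 y2] y3] y4]; rewrite !ffunE; do 2 (apply: eq_bigr => ? _).
rewrite exchange_big; do 2 (apply: eq_bigr => ? _).
by rewrite ffunE /=; ring.
Qed.

Lemma pullL_sub (A : 'M[K]_(m, n)) : zmod_morphism (pullL A).
Proof.
move=> T T'; apply/ffunP => -[[[y1 y2] y3] y4]; rewrite !ffunE.
do 4 (rewrite -sumrB; apply: eq_bigr => ? _).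
by rewrite !ffunE mulrBr.
Qed.

Lemma pullL_swap23 (A : 'M[K]_(m, n)) (T : tensor4 K ('I_2 * 'I_m)) :
  pullL A (swap23 T) = swap23 (pullL A T).
Proof.
apply/ffunP => -[[[y1 y2] y3] y4]; rewrite !ffunE; apply: eq_bigr => p _.
rewrite exchange_big; do 3 (apply: eq_bigr => ? _).
by rewrite ffunE /=; ring.
Qed.

Lemma pullL_swap34 (A : 'M[K]_(m, n)) (T : tensor4 K ('I_2 * 'I_m)) :
  pullL A (swap34 T) = swap34 (pullL A T).
Proof.
apply/ffunP => -[[[y1 y2] y3] y4]; rewrite !ffunE; do 2 (apply: eq_bigr => ? _).
rewrite exchange_big; do 2 (apply: eq_bigr => ? _).
by rewrite ffunE /=; ring.
Qed.

End TensorActions.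

Section WedgeOfCurvature.
Variable K : numFieldType.

Definition eps_tensor n (x : tensor4 K 'I_n) : tensor4 K ('I_2 * 'I_n) :=
  [ffun y => let '(y1, y2, y3, y4) := y in
     eps K y1.1 y3.1 * eps K y2.1 y4.1 * x (y1.2, y2.2, y3.2, y4.2)].

Lemma eps_tensor_swap_pairs n (x : tensor4 K 'I_n) : curvature_tensor x ->
  forall y1 y2 y3 y4, eps_tensor x (y2, y1, y4, y3) = eps_tensor x (y1, y2, y3, y4).
Proof.
move=> curv y1 y2 y3 y4.
by rewrite !ffunE /= curvature_swap_pairs // [eps _ y2.1 _ * _]mulrC.
Qed.

Lemma eps_tensor_pair_sym n (x : tensor4 K 'I_n) : curvature_tensor x ->
  forall y1 y2 y3 y4, eps_tensor x (y3, y4, y1, y2) = eps_tensor x (y1, y2, y3, y4).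
Proof.
move=> curv y1 y2 y3 y4.
by rewrite !ffunE -curvature_pair_sym // !(eps_antisym _ y3.1, eps_antisym _ y4.1) mulrNN.
Qed.

Lemma sl_act_eps_tensor n (x : tensor4 K 'I_n) (g : 'M[K]_2) y :
  sl_act g (eps_tensor x) y = \det g ^+ 2 * eps_tensor x y.
Proof.
case: y => -[[y1 y2] y3] y4; rewrite !ffunE /=.
rewrite [RHS](_ : _ = \det g * eps K y1.1 y3.1 * (\det g * eps K y2.1 y4.1)
                      * x (y1.2, y2.2, y3.2, y4.2)); last by ring.
by rewrite -!eps_mx_det !big_ord2 !ffunE /=; ring.
Qed.

Lemma pullL_eps_tensor m n (A : 'M[K]_(m, n)) (x : tensor4 K 'I_m) :
  pullL A (eps_tensor x) = eps_tensor (pullR A x).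
Proof.
apply/ffunP => -[[[y1 y2] y3] y4]; rewrite !ffunE /= !mulr_sumr.
do 4 (apply: eq_bigr => ? _; rewrite ?mulr_sumr).
by rewrite ffunE /=; ring.
Qed.

Definition wedge_of_curv n (x : tensor4 K 'I_n) : tensor4 K ('I_2 * 'I_n) :=
  alt234 (eps_tensor x).

Lemma wedge_of_curv_alternating n (x : tensor4 K 'I_n) : curvature_tensor x ->
  alternating4 (wedge_of_curv x).
Proof.
move=> curv; apply: alt234_alternating.
  exact: eps_tensor_swap_pairs.
exact: eps_tensor_pair_sym.
Qed.

Lemma wedge_of_curv_invariant n (x : tensor4 K 'I_n) (g : 'M[K]_2) : \det g = 1 ->
  sl_act g (wedge_of_curv x) = wedge_of_curv x.
Proof.
move=> detg; rewrite /wedge_of_curv.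
rewrite (alt234_morph (sl_act_sub g) (sl_act_swap23 g) (sl_act_swap34 g)).
by congr alt234; apply/ffunP => y; rewrite sl_act_eps_tensor detg expr1n mul1r.
Qed.

Lemma wedge_of_curv_pull m n (A : 'M[K]_(m, n)) (x : tensor4 K 'I_m) :
  wedge_of_curv (pullR A x) = pullL A (wedge_of_curv x).
Proof.
rewrite /wedge_of_curv (alt234_morph (pullL_sub A) (pullL_swap23 A) (pullL_swap34 A)).
by rewrite pullL_eps_tensor.
Qed.

Lemma wedge_of_curv_linear n (a : K) (x x' : tensor4 K 'I_n) :
  wedge_of_curv [ffun t => a * x t + x' t] =
  [ffun t => a * wedge_of_curv x t + wedge_of_curv x' t].
Proof. by apply/ffunP => -[[[y1 y2] y3] y4]; rewrite !ffunE /=; ring. Qed.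

Lemma wedge_of_curv0011 n (x : tensor4 K 'I_n) : curvature_tensor x ->
  forall i j k l,
  wedge_of_curv x ((o0, i), (o0, j), (o1, k), (o1, l)) = 3 * x (i, j, k, l).
Proof.
move=> curv i j k l; rewrite !ffunE /eps /=.
have bianchi := curvature_bianchi curv k i l j.
rewrite (curvature_antisym12 curv k i) (curvature_antisym12 curv l k)
  -(curvature_pair_sym curv i j k l) in bianchi.
by rewrite (curvature_antisym34 curv i j l k) -[RHS]addr0 -[in RHS]bianchi; ring.
Qed.

End WedgeOfCurvature.

Section InvariantTensors.
Variables (K : numFieldType) (n : nat).
Implicit Types (T : tensor4 K ('I_2 * 'I_n)) (g : 'M[K]_2).

Definition balanced (y : ('I_2 * 'I_n) * ('I_2 * 'I_n) * ('I_2 * 'I_n) * ('I_2 * 'I_n)) :=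
  let '(y1, y2, y3, y4) := y in (y1.1 + y2.1 + y3.1 + y4.1 == 2)%N.

Lemma sl_act_nested g T y1 y2 y3 y4 : sl_act g T (y1, y2, y3, y4) =
  \sum_(b1 < 2) g y1.1 b1 * \sum_(b2 < 2) g y2.1 b2 * \sum_(b3 < 2) g y3.1 b3 *
  \sum_(b4 < 2) g y4.1 b4 * T ((b1, y1.2), (b2, y2.2), (b3, y3.2), (b4, y4.2)).
Proof. by rewrite ffunE; do 4 (rewrite ?mulr_sumr; apply: eq_bigr => ? _); ring. Qed.

Lemma sl_act_diag (d : 'rV[K]_2) T y1 y2 y3 y4 :
  sl_act (diag_mx d) T (y1, y2, y3, y4) =
  d 0 y1.1 * d 0 y2.1 * d 0 y3.1 * d 0 y4.1 * T (y1, y2, y3, y4).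
Proof.
have diag_sum a (F : 'I_2 -> K) : \sum_(b < 2) diag_mx d a b * F b = d 0 a * F a.
  rewrite (bigD1 a) //= big1 ?addr0 => [|b nba]; first by rewrite mxE eqxx mulr1n.
  by rewrite mxE eq_sym (negbTE nba) mulr0n mul0r.
by rewrite sl_act_nested !diag_sum -!surjective_pairing !mulrA.
Qed.

Lemma sl_invariant_unbalanced T : (forall g, \det g = 1 -> sl_act g T = T) ->
  forall y, ~~ balanced y -> T y = 0.
Proof.
move=> inv [[[y1 y2] y3] y4] /= unbal.
pose d : 'rV[K]_2 := \row_i (if i == o0 then 2 else 2^-1).
have two_neq0 : (2 : K) != 0 by rewrite pnatr_eq0.
have det_d : \det (diag_mx d) = 1 by rewrite det_diag big_ord_recr big_ord1 !mxE /= mulfV.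
(* diag(2, 1/2) scales the component y by 2^4 / 4^s, s being the number of 1s among
   the U-indices of y. *)
have d_weight a : d 0 a * 4 ^+ a = 2.
  by case: (ord2P a) => ->; rewrite !mxE /=; [rewrite mulr1 | field].
have weights : d 0 y1.1 * d 0 y2.1 * d 0 y3.1 * d 0 y4.1
                * 4 ^+ (y1.1 + y2.1 + y3.1 + y4.1) = 4 ^+ 2.
  rewrite !exprD [LHS](_ : _ = (d 0 y1.1 * 4 ^+ y1.1) * (d 0 y2.1 * 4 ^+ y2.1)
                      * (d 0 y3.1 * 4 ^+ y3.1) * (d 0 y4.1 * 4 ^+ y4.1)); last by ring.
  by rewrite !d_weight; ring.
have := sl_act_diag d T y1 y2 y3 y4; rewrite inv // => /eqP.
rewrite -subr_eq0 -{1}[T _]mul1r -mulrBl mulf_eq0 => /orP [|/eqP //].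
rewrite subr_eq0 => /eqP d1; move: weights; rewrite -d1 mul1r -!natrX => /eqP.
by rewrite eqr_nat eqn_exp2l // (negbTE unbal).
Qed.

Lemma sl_invariant_bianchi T : alternating4 T ->
    (forall g, \det g = 1 -> sl_act g T = T) ->
  forall a b c d, T ((o0, a), (o0, b), (o1, c), (o1, d))
    + T ((o0, b), (o0, c), (o1, a), (o1, d)) + T ((o0, c), (o0, a), (o1, b), (o1, d)) = 0.
Proof.
move=> alt inv a b c d.
pose u : 'M[K]_2 := \matrix_(i, j) (i <= j)%:R.
have det_u : \det u = 1 by rewrite det_mx2 !mxE /= mulr1 mulr0 subr0.
have := sl_act_nested u T (o0, a) (o0, b) (o0, c) (o1, d).
rewrite inv // !big_ord2 !mxE /= !(mul1r, mul0r, mulr0, addr0, add0r).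
have zero y : ~~ balanced y -> T y = 0 := sl_invariant_unbalanced inv (y := y).
rewrite (zero ((o0, a), (o0, b), (o0, c), (o1, d))) //
  (zero ((o0, a), (o1, b), (o1, c), (o1, d))) // (zero ((o1, a), (o0, b), (o1, c), (o1, d))) //
  (zero ((o1, a), (o1, b), (o0, c), (o1, d))) // (zero ((o1, a), (o1, b), (o1, c), (o1, d))) //.
rewrite (alternating_swap23 alt (o0, a) (o1, b)) (alternating_swap12 alt (o0, a) (o0, c))
  (alternating_swap12 alt (o1, a) (o0, b)) (alternating_swap23 alt (o0, b) (o1, a)) !opprK.
by move=> E; rewrite [RHS]E; ring.
Qed.

Lemma alternating_eq T1 T2 : alternating4 T1 -> alternating4 T2 ->
  (forall i j k l,
     T1 ((o0, i), (o0, j), (o1, k), (o1, l)) = T2 ((o0, i), (o0, j), (o1, k), (o1, l))) ->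
  (forall y, ~~ balanced y -> T1 y = T2 y) -> T1 = T2.
Proof.
move=> alt1 alt2 E0011 Eunbal; apply/ffunP => y.
have [bal|] := boolP (balanced y); last exact: Eunbal.
move: bal; case: y => -[[[a1 i1] [a2 i2]] [a3 i3]] [a4 i4].
case: (ord2P a1) => ->; case: (ord2P a2) => ->; case: (ord2P a3) => ->; case: (ord2P a4) => ->;
rewrite //= => _;
(* each balanced pattern of U-indices is a permutation of (0, 0, 1, 1) *)
first [ by rewrite E0011
      | by rewrite (alternating_swap23 alt1) (alternating_swap23 alt2) E0011
      | by rewrite (alternating_swap34 alt1) (alternating_swap34 alt2)
          (alternating_swap23 alt1) (alternating_swap23 alt2) E0011
      | by rewrite (alternating_swap12 alt1) (alternating_swap12 alt2)
          (alternating_swap23 alt1) (alternating_swap23 alt2) E0011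
      | by rewrite (alternating_swap12 alt1) (alternating_swap12 alt2)
          (alternating_swap34 alt1) (alternating_swap34 alt2)
          (alternating_swap23 alt1) (alternating_swap23 alt2) E0011
      | by rewrite (alternating_swap23 alt1) (alternating_swap23 alt2)
          (alternating_swap12 alt1) (alternating_swap12 alt2)
          (alternating_swap34 alt1) (alternating_swap34 alt2)
          (alternating_swap23 alt1) (alternating_swap23 alt2) E0011 ].
Qed.

Lemma wedge_of_curv_inj (x x' : tensor4 K 'I_n) :
  curvature_tensor x -> curvature_tensor x' -> wedge_of_curv x = wedge_of_curv x' -> x = x'.
Proof.
move=> curv curv' E; apply/ffunP => -[[[i j] k] l].
apply: (mulfI (_ : 3 != 0)); first by rewrite pnatr_eq0.
by rewrite -!wedge_of_curv0011 // E.
Qed.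

Lemma wedge_of_curv_onto T :
  alternating4 T -> (forall g, \det g = 1 -> sl_act g T = T) ->
  exists x, curvature_tensor x /\ wedge_of_curv x = T.
Proof.
move=> alt inv.
have three_neq0 : (3 : K) != 0 by rewrite pnatr_eq0.
pose x : tensor4 K 'I_n :=
  [ffun t => let '(a, b, c, d) := t in 3^-1 * T ((o0, a), (o0, b), (o1, c), (o1, d))].
have curv : curvature_tensor x.
  move=> a b c d; rewrite !ffunE; split; last split.
  - by rewrite (alternating_swap12 alt (o0, a)) mulrN.
  - by rewrite (alternating_swap34 alt (o0, a)) mulrN.
  - by rewrite -!mulrDr sl_invariant_bianchi // mulr0.
exists x; split => //; apply: alternating_eq.
- exact: wedge_of_curv_alternating.
- exact: alt.
- by move=> i j k l; rewrite wedge_of_curv0011 // ffunE mulVKf.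
- move=> y unbal; rewrite (sl_invariant_unbalanced inv) //.
  by apply: sl_invariant_unbalanced unbal => g; apply: wedge_of_curv_invariant.
Qed.

End InvariantTensors.

Theorem proposition1 (R : realType) (b : bool)
    (Om : 'M[scalar_field R b]_2) :
  area_form Om ->
  exists phi : forall n : nat,
      tensor4 (scalar_field R b) 'I_n ->
      tensor4 (scalar_field R b) ('I_2 * 'I_n)%type,
    (* linear on R(V) *)
    (forall n (a : scalar_field R b) (x y : tensor4 (scalar_field R b) 'I_n),
        curvature_tensor x -> curvature_tensor y ->
        phi n [ffun t => a * x t + y t] = [ffun t => a * phi n x t + phi n y t]) /\
    (* maps R(V) into Lambda^4(U (x) V^* )^{SL(U)} *)
    (forall n (x : tensor4 (scalar_field R b) 'I_n), curvature_tensor x ->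
        alternating4 (phi n x) /\ sl_invariant Om (phi n x)) /\
    (* injective on R(V) *)
    (forall n (x y : tensor4 (scalar_field R b) 'I_n),
        curvature_tensor x -> curvature_tensor y -> phi n x = phi n y -> x = y) /\
    (* onto the invariants *)
    (forall n (T : tensor4 (scalar_field R b) ('I_2 * 'I_n)%type),
        alternating4 T -> sl_invariant Om T ->
        exists x, curvature_tensor x /\ phi n x = T) /\
    (* natural in V *)
    (forall m n (A : 'M[scalar_field R b]_(m, n)) (x : tensor4 (scalar_field R b) 'I_m),
        curvature_tensor x -> phi n (pullR A x) = pullL A (phi m x)).
Proof.
move=> area; exists (fun n => @wedge_of_curv _ n).
split; [|split; [|split; [|split]]].
- by move=> n a x y _ _; apply: wedge_of_curv_linear.
- move=> n x curv; split; first exact: wedge_of_curv_alternating.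
  by move=> g /(in_SLE g area); apply: wedge_of_curv_invariant.
- by move=> n x y; apply: wedge_of_curv_inj.
- move=> n T alt inv; apply: wedge_of_curv_onto => // g /(in_SLE g area).
  exact: inv.
- by move=> m n A x _; apply: wedge_of_curv_pull.
Qed.
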